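(* Let $b>0$. Then there exists $h_0\in(0,1)$ such that for all $h\in(0,h_0)$, \[ \mu_1(h,b)\le -h-\frac12h^{3/2}. \]
   Context: Let $\Omega=\{x\in\mathbb R^2:|x|<1\}$, $\mathbf A_0(x_1,x_2)=\frac12(-x_2,x_1)$. For $h>0$ and $b>0$ let \[ \mu_1(h,b)=\inf_{u\in H^1(\Omega),\,u\ne0}\frac{h^2\int_\Omega|(\nabla-ib\mathbf A_0)u|^2\,dx-h^{3/2}\int_{\partial\Omega}|u|^2\,ds}{\|u\|^2_{L^2(\Omega)}}, \] the lowest eigenvalue of the associated self-adjoint operator $\mathcal L_h^b=-(h\nabla-ibh\mathbf A_0)^2$ with the corresponding Robin boundary condition. (Equivalently $\mu_1(h,b)=h^2\lambda_1(b,-h^{-1/2})$.) *)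

From Stdlib Require Import Reals.
From Coquelicot Require Import Coquelicot.
Open Scope R_scope.

Definition pd1 (f : R -> R -> R) (x y : R) : R := Derive (fun t => f t y) x.
Definition pd2 (f : R -> R -> R) (x y : R) : R := Derive (fun t => f x t) y.

Definition C1_2d (f : R -> R -> R) : Prop :=
  forall x y, ex_derive (fun t => f t y) x /\ ex_derive (fun t => f x t) y /\
              continuity_2d_pt (pd1 f) x y /\ continuity_2d_pt (pd2 f) x y.

Definition admissible (u : R -> R -> C) : Prop :=
  C1_2d (fun x y => Re (u x y)) /\ C1_2d (fun x y => Im (u x y)).

Definition cpd1 (u : R -> R -> C) (x y : R) : C :=
  (pd1 (fun a c => Re (u a c)) x y, pd1 (fun a c => Im (u a c)) x y).
Definition cpd2 (u : R -> R -> C) (x y : R) : C :=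
  (pd2 (fun a c => Re (u a c)) x y, pd2 (fun a c => Im (u a c)) x y).

Definition A0_1 (x1 x2 : R) : R := - x2 / 2.
Definition A0_2 (x1 x2 : R) : R := x1 / 2.

Definition mag_grad_sq (b : R) (u : R -> R -> C) (x y : R) : R :=
  (Cmod (Cminus (cpd1 u x y) (Cmult (Cmult Ci (RtoC (b * A0_1 x y))) (u x y)))) ^ 2 +
  (Cmod (Cminus (cpd2 u x y) (Cmult (Cmult Ci (RtoC (b * A0_2 x y))) (u x y)))) ^ 2.

Definition int_disk (g : R -> R -> R) : R :=
  RInt (fun x => RInt (fun y => g x y) (- sqrt (1 - x ^ 2)) (sqrt (1 - x ^ 2))) (-1) 1.

(* Integral over the boundary circle w.r.t. arc length ds (parametrized by angle). *)
Definition int_circle (g : R -> R -> R) : R :=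
  RInt (fun t => g (cos t) (sin t)) 0 (2 * PI).

Definition rayleigh (h b : R) (u : R -> R -> C) : R :=
  (h ^ 2 * int_disk (mag_grad_sq b u)
   - Rpower h (3 / 2) * int_circle (fun x y => (Cmod (u x y)) ^ 2))
  / int_disk (fun x y => (Cmod (u x y)) ^ 2).

Definition mu1 (h b : R) : Rbar :=
  Glb_Rbar (fun q => exists u : R -> R -> C,
    admissible u /\ 0 < int_disk (fun x y => (Cmod (u x y)) ^ 2) /\ q = rayleigh h b u).

From Stdlib Require Import Reals Lra Psatz Lia.
From Coquelicot Require Import Coquelicot.
Open Scope list_scope.
Open Scope R_scope.

(* The bound is attained by the trial states u_n = (1 + y)^n e^{-i b x / 2}, which concentrate
   at the boundary point (0,1). Integrating in y and substituting x = cos t reduces every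
   integral in their Rayleigh quotient to the moments
   J_k = ∫_0^π ((1 + sin t)^k + (1 - sin t)^k) dt, and the recursion
   (k + 1) J_{k+1} = (2k + 1) J_k turns the quotient into an explicit rational function of n
   and e = h^{1/2}. For e in [8/(4n+5), 8/(4n+1)], i.e. n ≈ 2/e, that function is at most
   -h - h^{3/2}/2 as soon as n ≥ 10 + 20 b^2. *)

Lemma continuous_of_ex_derive (f : R -> R) (x : R) : ex_derive f x -> continuous f x.
Proof. exact (@ex_derive_continuous R_AbsRing R_NormedModule f x). Qed.

Lemma continuity_pt_of_ex_derive (f : R -> R) (x : R) :
  ex_derive f x -> continuity_pt f x.
Proof. intro Hf. apply continuity_pt_filterlim, continuous_of_ex_derive, Hf. Qed.

Lemma continuity_2d_pt_fst (f : R -> R) (x y : R) :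
  (forall z, ex_derive f z) -> continuity_2d_pt (fun u _ => f u) x y.
Proof.
  intro Hf. apply (continuity_1d_2d_pt_comp f (fun u _ => u)).
  - apply continuity_pt_of_ex_derive, Hf.
  - apply continuity_2d_pt_id1.
Qed.

Lemma continuity_2d_pt_snd (f : R -> R) (x y : R) :
  (forall z, ex_derive f z) -> continuity_2d_pt (fun _ v => f v) x y.
Proof.
  intro Hf. apply (continuity_1d_2d_pt_comp f (fun _ v => v)).
  - apply continuity_pt_of_ex_derive, Hf.
  - apply continuity_2d_pt_id2.
Qed.

Lemma RInt_ext_everywhere (f g : R -> R) (a b : R) :
  (forall t, f t = g t) -> RInt f a b = RInt g a b.
Proof. intro H. apply RInt_ext. intros t _. apply H. Qed.

Lemma int_disk_ext (f g : R -> R -> R) :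
  (forall x y, f x y = g x y) -> int_disk f = int_disk g.
Proof.
  intro H. unfold int_disk. apply RInt_ext_everywhere. intro x.
  apply RInt_ext_everywhere. intro y. apply H.
Qed.

Lemma cos_sq t : cos t ^ 2 = 1 - sin t ^ 2.
Proof. pose proof (sin2_cos2 t) as Hsc. unfold Rsqr in Hsc. simpl. lra. Qed.

Lemma Cmod_sq (z : C) : Cmod z ^ 2 = fst z ^ 2 + snd z ^ 2.
Proof.
  unfold Cmod. rewrite pow2_sqrt; [reflexivity|].
  apply Rplus_le_le_0_compat; apply pow2_ge_0.
Qed.

(* [(1 + y)^n e^{-i b x / 2}]: the phase turns [d/dx - i b A0_1] into multiplication
   by [-i b (1 - y) / 2], which vanishes at the boundary point (0,1) where the
   modulus concentrates as n grows. *)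
Definition trial (b : R) (n : nat) (x y : R) : C :=
  ((1 + y) ^ n * cos (b * x / 2), - ((1 + y) ^ n * sin (b * x / 2))).

Section Trial.
Variables (b : R) (n : nat).

Lemma pd1_Re_trial x y :
  pd1 (fun a c => Re (trial b n a c)) x y = - ((1 + y) ^ n * (b / 2 * sin (b * x / 2))).
Proof. apply is_derive_unique. unfold trial; simpl. auto_derive; auto. unfold Rdiv; ring. Qed.

Lemma pd1_Im_trial x y :
  pd1 (fun a c => Im (trial b n a c)) x y = - ((1 + y) ^ n * (b / 2 * cos (b * x / 2))).
Proof. apply is_derive_unique. unfold trial; simpl. auto_derive; auto. unfold Rdiv; ring. Qed.

Lemma pd2_Re_trial x y :
  pd2 (fun a c => Re (trial b n a c)) x y = INR n * (1 + y) ^ pred n * cos (b * x / 2).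
Proof. apply is_derive_unique. unfold trial; simpl. auto_derive; auto. ring. Qed.

Lemma pd2_Im_trial x y :
  pd2 (fun a c => Im (trial b n a c)) x y = - (INR n * (1 + y) ^ pred n * sin (b * x / 2)).
Proof. apply is_derive_unique. unfold trial; simpl. auto_derive; auto. ring. Qed.

Lemma trial_admissible : admissible (trial b n).
Proof.
  split; intros x y; repeat split;
    try (unfold trial; simpl; auto_derive; auto; fail);
    eapply continuity_2d_pt_ext;
    try (intros; symmetry; first [apply pd1_Re_trial | apply pd1_Im_trial
                                  | apply pd2_Re_trial | apply pd2_Im_trial]);
    repeat (apply continuity_2d_pt_opp || apply continuity_2d_pt_mult);
    first [apply continuity_2d_pt_snd | apply continuity_2d_pt_fst];
    intro; auto_derive; auto.
Qed.

Lemma Cmod_trial_sq x y : Cmod (trial b n x y) ^ 2 = (1 + y) ^ (2 * n).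
Proof.
  rewrite Cmod_sq, Nat.mul_comm, pow_mult. unfold trial; simpl fst; simpl snd.
  pose proof (sin2_cos2 (b * x / 2)) as Hsc. unfold Rsqr in Hsc.
  transitivity (((1 + y) ^ n) ^ 2 * (sin (b * x / 2) * sin (b * x / 2)
                                      + cos (b * x / 2) * cos (b * x / 2))); [ring|].
  rewrite Hsc. ring.
Qed.

End Trial.

Lemma mag_grad_sq_trial b m x y :
  mag_grad_sq b (trial b (S m)) x y =
  INR (S m) ^ 2 * (1 + y) ^ (2 * m) + b ^ 2 / 4 * ((1 - y) ^ 2 + x ^ 2) * (1 + y) ^ (2 * S m).
Proof.
  unfold mag_grad_sq, cpd1, cpd2.
  rewrite pd1_Re_trial, pd1_Im_trial, pd2_Re_trial, pd2_Im_trial, !Cmod_sq.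
  unfold trial, A0_1, A0_2; simpl fst; simpl snd; simpl pred.
  replace (2 * S m)%nat with (S m * 2)%nat by lia. rewrite (Nat.mul_comm 2 m), !pow_mult.
  pose proof (sin2_cos2 (b * x / 2)) as Hsc. unfold Rsqr in Hsc.
  set (c := cos (b * x / 2)) in *. set (s := sin (b * x / 2)) in *.
  simpl (_ ^ S m). set (P := (1 + y) ^ m).
  transitivity ((INR (S m) ^ 2 * P ^ 2 + b ^ 2 / 4 * ((1 - y) ^ 2 + x ^ 2) * ((1 + y) * P) ^ 2)
                * (s * s + c * c)).
  - change (match m with 0%nat => 1 | S _ => INR m + 1 end) with (INR (S m)). field.
  - rewrite Hsc. ring.
Qed.

Definition refl_sum (w : R -> R) (s : R) : R := w s + w (- s).
Definition refl_diff (W : R -> R) (s : R) : R := W s - W (- s).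

Definition disk_profile (w0 w2 : R -> R) (t : R) : R :=
  cos t ^ 2 * refl_sum w0 (sin t) + cos t ^ 4 / 3 * refl_sum w2 (sin t).

Lemma continuous_refl_sum_sin (w : R -> R) (t : R) :
  (forall y, continuous w y) -> continuous (fun t => refl_sum w (sin t)) t.
Proof.
  intro Hw. unfold refl_sum.
  apply (continuous_plus (fun t => w (sin t)) (fun t => w (- sin t)));
    apply (continuous_comp _ w); try apply Hw; apply continuous_of_ex_derive; auto_derive; auto.
Qed.

Lemma continuous_disk_profile (w0 w2 : R -> R) (t : R) :
  (forall y, continuous w0 y) -> (forall y, continuous w2 y) ->
  continuous (disk_profile w0 w2) t.
Proof.
  intros H0 H2. unfold disk_profile.
  apply (continuous_plus (fun t => cos t ^ 2 * refl_sum w0 (sin t))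
                         (fun t => cos t ^ 4 / 3 * refl_sum w2 (sin t)));
    apply (continuous_mult (fun t => _ : R)); try (apply continuous_refl_sum_sin; assumption);
    apply continuous_of_ex_derive; auto_derive; auto.
Qed.

Section SeparableDiskIntegral.
Variables w0 w2 W0 W2 : R -> R.
Hypothesis W0_primitive : forall y, is_derive W0 y (w0 y).
Hypothesis W2_primitive : forall y, is_derive W2 y (w2 y).
Hypothesis w0_continuous : forall y, continuous w0 y.
Hypothesis w2_continuous : forall y, continuous w2 y.

Let ex_derive_W0 y : ex_derive W0 y. Proof. eexists; apply W0_primitive. Qed.
Let ex_derive_W2 y : ex_derive W2 y. Proof. eexists; apply W2_primitive. Qed.
Let Derive_W0 y : Derive (fun z => W0 z) y = w0 y.
Proof. apply is_derive_unique, W0_primitive. Qed.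
Let Derive_W2 y : Derive (fun z => W2 z) y = w2 y.
Proof. apply is_derive_unique, W2_primitive. Qed.

Let chord (x : R) : R := sqrt (1 - x ^ 2).

Let slice (x : R) : R := refl_diff W0 (chord x) + x ^ 2 * refl_diff W2 (chord x).

Let RInt_chord x : RInt (fun y => w0 y + x ^ 2 * w2 y) (- chord x) (chord x) = slice x.
Proof.
  apply is_RInt_unique.
  replace (slice x) with (minus ((fun y => W0 y + x ^ 2 * W2 y) (chord x))
                                ((fun y => W0 y + x ^ 2 * W2 y) (- chord x)))
    by (unfold slice, refl_diff, minus, plus, opp; simpl; ring).
  apply (is_RInt_derive (V := R_CompleteNormedModule) (fun y => W0 y + x ^ 2 * W2 y)).
  - intros y _. auto_derive.
    + repeat split; auto.
    + rewrite Derive_W0, Derive_W2. ring.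
  - intros y _. apply (continuous_plus w0 (fun y => x ^ 2 * w2 y)); [apply w0_continuous|].
    apply (continuous_mult (fun _ => x ^ 2) w2); [apply continuous_const | apply w2_continuous].
Qed.

Let continuous_slice x : continuous slice x.
Proof.
  assert (Hchord : continuous chord x).
  { apply (continuous_comp (fun x => 1 - x ^ 2) sqrt).
    - apply continuous_of_ex_derive; auto_derive; auto.
    - apply continuous_sqrt. }
  assert (Hdiff : forall W : R -> R, (forall y, ex_derive W y) ->
            continuous (fun x => refl_diff W (chord x)) x).
  { intros W HW. unfold refl_diff.
    apply (continuous_minus (fun x => W (chord x)) (fun x => W (- chord x))).
    - apply (continuous_comp chord W); [exact Hchord | apply continuous_of_ex_derive, HW].
    - apply (continuous_comp (fun x => - chord x) W);
        [apply (continuous_opp chord), Hchord | apply continuous_of_ex_derive, HW]. }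
  apply (continuous_plus (fun x => refl_diff W0 (chord x))
                         (fun x => x ^ 2 * refl_diff W2 (chord x))); [apply Hdiff; assumption|].
  apply (continuous_mult (fun x => x ^ 2)); [apply continuous_of_ex_derive; auto_derive; auto|].
  apply Hdiff; assumption.
Qed.

Let chord_cos t : 0 <= t <= PI -> chord (cos t) = sin t.
Proof.
  intro Ht. unfold chord. replace (1 - cos t ^ 2) with (sin t ^ 2) by (rewrite cos_sq; ring).
  apply sqrt_pow2, sin_ge_0; lra.
Qed.

Let RInt_slice_cos : RInt slice (-1) 1 = RInt (fun t => sin t * slice (cos t)) 0 PI.
Proof.
  pose proof PI_RGT_0 as Hpi.
  assert (Hsub := RInt_comp (V := R_CompleteNormedModule) slice cos (fun t => - sin t) PI 0).
  rewrite cos_PI, cos_0 in Hsub. rewrite <- Hsub.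
  2: { intros; apply continuous_slice. }
  2: { intros; split; [auto_derive; auto; ring | apply continuous_of_ex_derive; auto_derive; auto]. }
  assert (Hex : ex_RInt (fun t => scal (- sin t) (slice (cos t))) 0 PI).
  { apply (ex_RInt_continuous (V := R_CompleteNormedModule)). intros t _.
    apply (continuous_mult (fun t => - sin t) (fun t => slice (cos t))).
    - apply continuous_of_ex_derive; auto_derive; auto.
    - apply (continuous_comp cos slice); [apply continuous_of_ex_derive; auto_derive; auto|].
      apply continuous_slice. }
  rewrite <- opp_RInt_swap, <- RInt_opp by exact Hex.
  apply RInt_ext. intros t Ht.
  unfold opp, scal; simpl; unfold mult; simpl. ring.
Qed.

Let RInt_sin_slice_cos :
  RInt (fun t => sin t * slice (cos t)) 0 PI = RInt (disk_profile w0 w2) 0 PI.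
Proof.
  set (Phi t := - cos t * refl_diff W0 (sin t) - cos t ^ 3 / 3 * refl_diff W2 (sin t)).
  assert (Hd : is_RInt (fun t => sin t * slice (cos t) - disk_profile w0 w2 t) 0 PI
                       (minus (Phi PI) (Phi 0))).
  { apply (is_RInt_derive (V := R_CompleteNormedModule) Phi).
    - intros t Ht. rewrite Rmin_left, Rmax_right in Ht by (pose proof PI_RGT_0; lra).
      unfold Phi, slice, disk_profile, refl_sum, refl_diff. rewrite chord_cos by lra.
      auto_derive; [repeat split; auto|].
      rewrite !Derive_W0, !Derive_W2. field.
    - intros t _. apply (continuous_minus (fun t => sin t * slice (cos t))).
      + apply (continuous_mult sin (fun t => slice (cos t))).
        * apply continuous_of_ex_derive; auto_derive; auto.
        * apply (continuous_comp cos slice); [apply continuous_of_ex_derive; auto_derive; auto|].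
          apply continuous_slice.
      + apply continuous_disk_profile; assumption. }
  replace (minus (Phi PI) (Phi 0)) with 0 in Hd
    by (unfold minus, plus, opp, Phi, refl_diff; simpl; rewrite sin_PI, sin_0, Ropp_0; ring).
  assert (Hex : ex_RInt (disk_profile w0 w2) 0 PI).
  { apply (ex_RInt_continuous (V := R_CompleteNormedModule)). intros.
    apply continuous_disk_profile; assumption. }
  transitivity (RInt (fun t => plus (disk_profile w0 w2 t)
                                    (sin t * slice (cos t) - disk_profile w0 w2 t)) 0 PI).
  - apply RInt_ext. intros. unfold plus; simpl. ring.
  - rewrite (RInt_plus (V := R_CompleteNormedModule)); [| exact Hex | eexists; exact Hd].
    rewrite (is_RInt_unique _ _ _ _ Hd). unfold plus; simpl. ring.
Qed.

Lemma int_disk_separable :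
  int_disk (fun x y => w0 y + x ^ 2 * w2 y) = RInt (disk_profile w0 w2) 0 PI.
Proof.
  rewrite <- RInt_sin_slice_cos, <- RInt_slice_cos.
  apply RInt_ext. intros x _. apply RInt_chord.
Qed.

End SeparableDiskIntegral.

Definition sin_moment (k : nat) (t : R) : R := (1 + sin t) ^ k + (1 - sin t) ^ k.

Definition J (k : nat) : R := RInt (sin_moment k) 0 PI.

Lemma ex_RInt_sin_moment k a b : ex_RInt (sin_moment k) a b.
Proof.
  apply (ex_RInt_continuous (V := R_CompleteNormedModule)). intros.
  apply continuous_of_ex_derive. unfold sin_moment. auto_derive; auto.
Qed.

Lemma J_0 : J 0 = 2 * PI.
Proof.
  unfold J. rewrite (RInt_ext _ (fun _ => 2)) by (intros; unfold sin_moment; simpl; ring).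
  rewrite RInt_const. unfold scal; simpl; unfold mult; simpl. ring.
Qed.

(* Integration by parts with [((1 + sin t)^k - (1 - sin t)^k) cos t], which vanishes at 0 and PI. *)
Lemma J_succ k : INR (k + 1) * J (S k) = INR (2 * k + 1) * J k.
Proof.
  destruct k as [|m].
  - unfold J. simpl. rewrite Rmult_1_l, Rmult_1_l.
    apply RInt_ext. intros. unfold sin_moment. simpl. ring.
  - set (k := S m).
    assert (Hd : is_RInt (fun t => INR (2 * k + 1) * sin_moment k t - INR (k + 1) * sin_moment (S k) t)
                         0 PI
                         (minus (((1 + sin PI) ^ k - (1 - sin PI) ^ k) * cos PI)
                                (((1 + sin 0) ^ k - (1 - sin 0) ^ k) * cos 0))).
    { apply (is_RInt_derive (V := R_CompleteNormedModule)
               (fun t => ((1 + sin t) ^ k - (1 - sin t) ^ k) * cos t)).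
      - intros t _. auto_derive; auto. unfold k, sin_moment. simpl pred.
        change (match m with 0%nat => 1 | S _ => INR m + 1 end) with (INR (S m)).
        replace (1 + - sin t) with (1 - sin t) by ring.
        rewrite !plus_INR, !mult_INR, !S_INR. simpl INR.
        pose proof (sin2_cos2 t) as Hsc. unfold Rsqr in Hsc.
        set (s := sin t) in *. set (c := cos t) in *. simpl pow.
        set (A := (1 + s) ^ m). set (B := (1 - s) ^ m).
        apply Rminus_diag_uniq.
        transitivity ((INR m + 1) * (A + B) * (s * s + c * c - 1)); [ring | rewrite Hsc; ring].
      - intros. apply continuous_of_ex_derive. unfold sin_moment. auto_derive; auto. }
    replace (minus _ _) with 0 in Hd
      by (rewrite sin_PI, sin_0; unfold minus, plus, opp; simpl; rewrite Rplus_0_r, Rminus_0_r, pow1; ring).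
    apply (is_RInt_unique (V := R_CompleteNormedModule)) in Hd.
    rewrite (RInt_minus (V := R_CompleteNormedModule)) in Hd.
    2, 3: apply (ex_RInt_scal (V := R_CompleteNormedModule)), ex_RInt_sin_moment.
    rewrite !(RInt_scal (V := R_CompleteNormedModule)) in Hd by apply ex_RInt_sin_moment.
    unfold J. set (a := INR (2 * k + 1)) in *. set (a' := INR (k + 1)) in *.
    unfold minus, plus, opp, scal in Hd; simpl in Hd; unfold mult in Hd; simpl in Hd.
    lra.
Qed.

Lemma J_pos k : 0 < J k.
Proof.
  induction k as [|k IH].
  - rewrite J_0. pose proof PI_RGT_0. lra.
  - pose proof (J_succ k).
    assert (0 < INR (k + 1)) by (apply lt_0_INR; lia).
    assert (0 < INR (2 * k + 1)) by (apply lt_0_INR; lia).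
    nra.
Qed.

Lemma RInt_circle_pow_sin k : RInt (fun t => (1 + sin t) ^ k) 0 (2 * PI) = J k.
Proof.
  assert (Hex : forall a b, ex_RInt (fun t => (1 + sin t) ^ k) a b).
  { intros. apply (ex_RInt_continuous (V := R_CompleteNormedModule)). intros.
    apply continuous_of_ex_derive; auto_derive; auto. }
  rewrite <- (RInt_Chasles (V := R_CompleteNormedModule) _ 0 PI (2 * PI)) by apply Hex.
  assert (Hshift := RInt_comp_lin (V := R_CompleteNormedModule) (fun t => (1 + sin t) ^ k) 1 PI 0 PI).
  replace (1 * 0 + PI) with PI in Hshift by ring.
  replace (1 * PI + PI) with (2 * PI) in Hshift by ring.
  rewrite <- Hshift by apply Hex.
  rewrite <- (RInt_plus (V := R_CompleteNormedModule)).
  - unfold J. apply RInt_ext. intros t _.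
    unfold plus, scal, sin_moment; simpl; unfold mult; simpl.
    rewrite neg_sin, !Rmult_1_l. replace (1 + - sin t) with (1 - sin t) by ring. reflexivity.
  - apply Hex.
  - apply (ex_RInt_continuous (V := R_CompleteNormedModule)). intros.
    unfold scal; simpl; unfold mult; simpl. apply continuous_of_ex_derive; auto_derive; auto.
Qed.

Fixpoint J_quot (N : R) (j : nat) : R :=
  match j with
  | O => 1
  | S j => J_quot N j * (4 * N + 2 * INR j + 1) / (2 * N + INR j + 1)
  end.

Lemma J_shift n j : J (2 * n + j) = J_quot (INR n) j * J (2 * n).
Proof.
  induction j as [|j IH]; simpl J_quot.
  - rewrite Nat.add_0_r. ring.
  - pose proof (J_succ (2 * n + j)) as Hrec. rewrite IH, Nat.add_1_r in Hrec.
    rewrite Nat.add_succ_r.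
    replace (INR (S (2 * n + j))) with (2 * INR n + INR j + 1) in Hrec
      by (rewrite S_INR, plus_INR, mult_INR; simpl; ring).
    replace (INR (2 * (2 * n + j) + 1)) with (4 * INR n + 2 * INR j + 1) in Hrec
      by (rewrite plus_INR, !mult_INR, plus_INR, mult_INR; simpl; ring).
    assert (0 <= INR n) by apply pos_INR. assert (0 <= INR j) by apply pos_INR.
    apply Rmult_eq_reg_l with (2 * INR n + INR j + 1); [|lra].
    rewrite Hrec. field. lra.
Qed.

Fixpoint moment_comb (l : list (R * nat)) (t : R) : R :=
  match l with
  | nil => 0
  | (c, k) :: l => c * sin_moment k t + moment_comb l t
  end.

Fixpoint J_comb (l : list (R * nat)) : R :=
  match l with
  | nil => 0
  | (c, k) :: l => c * J k + J_comb l
  end.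

Lemma moment_comb_app l l' t : moment_comb (l ++ l') t = moment_comb l t + moment_comb l' t.
Proof. induction l as [|[c k] l IH]; simpl; [ring | rewrite IH; ring]. Qed.

Lemma RInt_moment_comb l : RInt (moment_comb l) 0 PI = J_comb l.
Proof.
  assert (Hcont : forall l t, continuous (moment_comb l) t).
  { intros l' t. induction l' as [|[c k] l' IH]; simpl.
    - apply (@continuous_const R_UniformSpace R_UniformSpace).
    - apply (continuous_plus (fun t => c * sin_moment k t) (moment_comb l')); [|apply IH].
      apply continuous_of_ex_derive. unfold sin_moment. auto_derive; auto. }
  induction l as [|[c k] l IH]; simpl.
  - change (moment_comb nil) with (fun _ : R => 0).
    rewrite RInt_const. unfold scal; simpl; unfold mult; simpl. ring.
  - rewrite (RInt_plus (V := R_CompleteNormedModule) (fun t => c * sin_moment k t) (moment_comb l)).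
    + rewrite (RInt_scal (V := R_CompleteNormedModule)) by apply ex_RInt_sin_moment.
      rewrite IH. unfold J, plus, scal; simpl; unfold mult; simpl. ring.
    + apply (ex_RInt_scal (V := R_CompleteNormedModule)), ex_RInt_sin_moment.
    + apply (ex_RInt_continuous (V := R_CompleteNormedModule)). intros. apply Hcont.
Qed.

Fixpoint pow_comb (l : list (R * nat)) (y : R) : R :=
  match l with
  | nil => 0
  | (c, k) :: l => c * (1 + y) ^ k + pow_comb l y
  end.

Fixpoint pow_comb_primitive (l : list (R * nat)) (y : R) : R :=
  match l with
  | nil => 0
  | (c, k) :: l => c * ((1 + y) ^ S k / INR (S k)) + pow_comb_primitive l y
  end.

Lemma is_derive_pow_comb_primitive l y : is_derive (pow_comb_primitive l) y (pow_comb l y).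
Proof.
  induction l as [|[c k] l IH]; simpl.
  - apply (is_derive_const (K := R_AbsRing) (V := R_NormedModule)).
  - apply (is_derive_plus (fun y => c * ((1 + y) ^ S k / INR (S k))) (pow_comb_primitive l));
      [|exact IH].
    assert (Hk : INR (S k) <> 0) by (apply not_0_INR; lia).
    auto_derive; [auto|]. simpl pred.
    change (match k with 0%nat => 1 | S _ => INR k + 1 end) with (INR (S k)). field. exact Hk.
Qed.

Lemma continuous_pow_comb l y : continuous (pow_comb l) y.
Proof.
  induction l as [|[c k] l IH]; simpl.
  - apply (@continuous_const R_UniformSpace R_UniformSpace).
  - apply (continuous_plus (fun y => c * (1 + y) ^ k) (pow_comb l)); [|exact IH].
    apply continuous_of_ex_derive. auto_derive; auto.
Qed.

(* Since [cos t ^ 2 = (1 + sin t) (1 - sin t)], the disk profile of a power of [1 + y] is a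
   combination of higher moments [sin_moment]. *)
Fixpoint weight_moments (l : list (R * nat)) : list (R * nat) :=
  match l with
  | nil => nil
  | (c, k) :: l => (2 * c, (k + 1)%nat) :: (- c, (k + 2)%nat) :: weight_moments l
  end.

Fixpoint sq_weight_moments (l : list (R * nat)) : list (R * nat) :=
  match l with
  | nil => nil
  | (c, k) :: l =>
      (4 / 3 * c, (k + 2)%nat) :: (- (4 / 3) * c, (k + 3)%nat) :: (c / 3, (k + 4)%nat)
        :: sq_weight_moments l
  end.

Lemma disk_profile_pow_comb l0 l2 t :
  disk_profile (pow_comb l0) (pow_comb l2) t =
  moment_comb (weight_moments l0 ++ sq_weight_moments l2) t.
Proof.
  unfold disk_profile. rewrite moment_comb_app. f_equal.
  - induction l0 as [|[c k] l IH]; unfold refl_sum in *; cbn [pow_comb weight_moments moment_comb].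
    + ring.
    + rewrite <- IH. unfold sin_moment. rewrite !Nat.add_succ_r, !Nat.add_0_r, cos_sq, <- !tech_pow_Rmult.
      replace (1 + - sin t) with (1 - sin t) by ring. ring.
  - induction l2 as [|[c k] l IH]; unfold refl_sum in *;
      cbn [pow_comb sq_weight_moments moment_comb].
    + field.
    + rewrite <- IH. unfold sin_moment. rewrite !Nat.add_succ_r, !Nat.add_0_r.
      replace (cos t ^ 4) with ((cos t ^ 2) ^ 2) by ring. rewrite cos_sq, <- !tech_pow_Rmult.
      replace (1 + - sin t) with (1 - sin t) by ring. field.
Qed.

Lemma int_disk_pow_comb l0 l2 :
  int_disk (fun x y => pow_comb l0 y + x ^ 2 * pow_comb l2 y) =
  J_comb (weight_moments l0 ++ sq_weight_moments l2).
Proof.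
  rewrite (int_disk_separable _ _ (pow_comb_primitive l0) (pow_comb_primitive l2)).
  - rewrite <- RInt_moment_comb. apply RInt_ext_everywhere, disk_profile_pow_comb.
  - apply is_derive_pow_comb_primitive.
  - apply is_derive_pow_comb_primitive.
  - apply continuous_pow_comb.
  - apply continuous_pow_comb.
Qed.

Definition mass_coef (N : R) : R := 2 * J_quot N 1 - J_quot N 2.
Definition kinetic_coef (N : R) : R := N ^ 2 / (4 * N - 1).
Definition field_coef (N : R) : R :=
  8 * J_quot N 1 - 32 / 3 * J_quot N 2 + 14 / 3 * J_quot N 3 - 2 / 3 * J_quot N 4.

Lemma mass_coef_closed N : 0 <= N -> mass_coef N = (4 * N + 1) / ((2 * N + 1) * (2 * N + 2)).
Proof. intro HN. unfold mass_coef, J_quot. simpl INR. field. lra. Qed.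

Lemma mass_coef_pos N : 0 <= N -> 0 < mass_coef N.
Proof. intro HN. rewrite mass_coef_closed by exact HN. apply Rdiv_lt_0_compat; nra. Qed.

Lemma J_odd_pred m : (4 * INR (S m) - 1) * J (2 * m + 1) = 2 * INR (S m) * J (2 * S m).
Proof.
  pose proof (J_succ (2 * m + 1)) as Hrec.
  replace (S (2 * m + 1)) with (2 * S m)%nat in Hrec by lia.
  replace (INR (2 * m + 1 + 1)) with (2 * INR (S m)) in Hrec
    by (rewrite S_INR, !plus_INR, mult_INR; simpl; ring).
  replace (INR (2 * (2 * m + 1) + 1)) with (4 * INR (S m) - 1) in Hrec
    by (rewrite S_INR, !plus_INR, !mult_INR, plus_INR, mult_INR; simpl; ring).
  lra.
Qed.

Lemma int_circle_Cmod_trial b n :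
  int_circle (fun x y => Cmod (trial b n x y) ^ 2) = J (2 * n).
Proof.
  unfold int_circle. rewrite <- RInt_circle_pow_sin.
  apply RInt_ext_everywhere. intro t. apply Cmod_trial_sq.
Qed.

Lemma int_disk_Cmod_trial b n :
  int_disk (fun x y => Cmod (trial b n x y) ^ 2) = mass_coef (INR n) * J (2 * n).
Proof.
  rewrite (int_disk_ext _ (fun x y => pow_comb ((1, (2 * n)%nat) :: nil) y + x ^ 2 * pow_comb nil y))
    by (intros; cbn [pow_comb]; rewrite Cmod_trial_sq; ring).
  rewrite int_disk_pow_comb. cbn [weight_moments sq_weight_moments J_comb app].
  rewrite !J_shift. unfold mass_coef. ring.
Qed.

Lemma int_disk_mag_grad_sq_trial b m :
  int_disk (mag_grad_sq b (trial b (S m))) =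
  (kinetic_coef (INR (S m)) + b ^ 2 / 4 * field_coef (INR (S m))) * J (2 * S m).
Proof.
  set (N := INR (S m)).
  rewrite (int_disk_ext _ (fun x y =>
             pow_comb ((N ^ 2, (2 * m)%nat) :: (b ^ 2, (2 * S m)%nat) :: (- b ^ 2, (2 * S m + 1)%nat)
                       :: (b ^ 2 / 4, (2 * S m + 2)%nat) :: nil) y
             + x ^ 2 * pow_comb ((b ^ 2 / 4, (2 * S m)%nat) :: nil) y)).
  2: { intros. rewrite mag_grad_sq_trial. cbn [pow_comb]. fold N.
       rewrite !pow_add. replace (1 - y) with (2 - (1 + y)) by ring. field. }
  rewrite int_disk_pow_comb. cbn [weight_moments sq_weight_moments J_comb app].
  rewrite <- !Nat.add_assoc. cbn [Nat.add].
  replace (2 * m + 2)%nat with (2 * S m)%nat by lia.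
  assert (HN : 1 <= N) by (unfold N; rewrite S_INR; pose proof (pos_INR m); lra).
  assert (Hodd : J (2 * m + 1) = 2 * N / (4 * N - 1) * J (2 * S m)).
  { apply Rmult_eq_reg_l with (4 * N - 1); [|lra]. unfold N. rewrite J_odd_pred. fold N. field. lra. }
  rewrite Hodd, !J_shift. fold N. unfold kinetic_coef, field_coef. field. lra.
Qed.

Definition defect (N e : R) : R := e ^ 2 * kinetic_coef N - e + (1 + e / 2) * mass_coef N.

Ltac nonneg_poly :=
  repeat (apply Rplus_le_le_0_compat || apply Rmult_le_pos); try lra; try (apply pow_le; lra).

(* Each identity below is [field] applied to rational functions of [x = N - 10] whose
   numerator and denominator have only positive coefficients. *)
Lemma field_coef_le N : 10 <= N -> field_coef N <= 1 / N ^ 2.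
Proof.
  intro HN. set (x := N - 10). replace N with (x + 10) by (unfold x; ring).
  assert (Hx : 0 <= x) by (unfold x; lra). clearbody x.
  assert (E : 1 / (x + 10) ^ 2 - field_coef (x + 10) = (8612 + 1870*x + 121*x^2 + 2*x^3) /
     (12751200 + 7095240*x + 1643512*x^2 + 202850*x^3 + 14070*x^4 + 520*x^5 + 8*x^6)).
  { unfold field_coef, J_quot. simpl INR. field. repeat split; nra. }
  assert (0 <= (8612 + 1870*x + 121*x^2 + 2*x^3) /
     (12751200 + 7095240*x + 1643512*x^2 + 202850*x^3 + 14070*x^4 + 520*x^5 + 8*x^6)).
  { apply Rdiv_le_0_compat; [nonneg_poly|].
    assert (0 <= 7095240*x + 1643512*x^2 + 202850*x^3 + 14070*x^4 + 520*x^5 + 8*x^6)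
      by nonneg_poly. lra. }
  lra.
Qed.

Lemma defect_at_left_end N : 10 <= N -> defect N (8 / (4 * N + 5)) <= - (1 / (20 * N ^ 3)).
Proof.
  intro HN. set (x := N - 10). replace N with (x + 10) by (unfold x; ring).
  assert (Hx : 0 <= x) by (unfold x; lra). clearbody x.
  assert (E : - (1 / (20 * (x + 10) ^ 3)) - defect (x + 10) (8 / (4 * (x + 10) + 5)) =
     (20606775 + 10264735*x + 2034746*x^2 + 200634*x^3 + 9840*x^4 + 192*x^5) /
     (364864500000 + 279664650000*x + 93742605000*x^2 + 17947867500*x^3 + 2146753700*x^4
      + 164264680*x^5 + 7852320*x^6 + 214400*x^7 + 2560*x^8)).
  { unfold defect, kinetic_coef, mass_coef, J_quot. simpl INR. field. repeat split; nra. }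
  assert (0 <= (20606775 + 10264735*x + 2034746*x^2 + 200634*x^3 + 9840*x^4 + 192*x^5) /
     (364864500000 + 279664650000*x + 93742605000*x^2 + 17947867500*x^3 + 2146753700*x^4
      + 164264680*x^5 + 7852320*x^6 + 214400*x^7 + 2560*x^8)).
  { apply Rdiv_le_0_compat; [nonneg_poly|].
    assert (0 <= 279664650000*x + 93742605000*x^2 + 17947867500*x^3 + 2146753700*x^4
                 + 164264680*x^5 + 7852320*x^6 + 214400*x^7 + 2560*x^8) by nonneg_poly.
    lra. }
  lra.
Qed.

Lemma defect_at_right_end N : 10 <= N -> defect N (8 / (4 * N + 1)) <= - (1 / (20 * N ^ 3)).
Proof.
  intro HN. set (x := N - 10). replace N with (x + 10) by (unfold x; ring).
  assert (Hx : 0 <= x) by (unfold x; lra). clearbody x.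
  assert (E : - (1 / (20 * (x + 10) ^ 3)) - defect (x + 10) (8 / (4 * (x + 10) + 1)) =
     (14345871 + 7679767*x + 1635178*x^2 + 173226*x^3 + 9136*x^4 + 192*x^5) /
     (302882580000 + 237409434000*x + 81400315400*x^2 + 15945634380*x^3 + 1951921860*x^4
      + 152892840*x^5 + 7483680*x^6 + 209280*x^7 + 2560*x^8)).
  { unfold defect, kinetic_coef, mass_coef, J_quot. simpl INR. field. repeat split; nra. }
  assert (0 <= (14345871 + 7679767*x + 1635178*x^2 + 173226*x^3 + 9136*x^4 + 192*x^5) /
     (302882580000 + 237409434000*x + 81400315400*x^2 + 15945634380*x^3 + 1951921860*x^4
      + 152892840*x^5 + 7483680*x^6 + 209280*x^7 + 2560*x^8)).
  { apply Rdiv_le_0_compat; [nonneg_poly|].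
    assert (0 <= 237409434000*x + 81400315400*x^2 + 15945634380*x^3 + 1951921860*x^4
                 + 152892840*x^5 + 7483680*x^6 + 209280*x^7 + 2560*x^8) by nonneg_poly.
    lra. }
  lra.
Qed.

Lemma convex_quadratic_le (A B C e1 e2 e v : R) :
  0 <= A -> e1 <= e <= e2 ->
  A * e1 ^ 2 + B * e1 + C <= v -> A * e2 ^ 2 + B * e2 + C <= v ->
  A * e ^ 2 + B * e + C <= v.
Proof.
  intros HA [He1 He2] H1 H2.
  assert (Hchord : A * (e - e1) * (e2 - e) >= 0) by (apply Rle_ge; apply Rmult_le_pos; nra).
  destruct (Req_dec e1 e2) as [Heq|Hne]; [subst; replace e with e2 by lra; lra|].
  apply Rmult_le_reg_l with (e2 - e1); [lra|].
  assert (Hsplit : (e2 - e1) * (A * e ^ 2 + B * e + C)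
          = (e2 - e) * (A * e1 ^ 2 + B * e1 + C) + (e - e1) * (A * e2 ^ 2 + B * e2 + C)
            - A * (e - e1) * (e2 - e) * (e2 - e1)) by ring.
  rewrite Hsplit. nra.
Qed.

(* Convexity in [e] reduces the kinetic part to the two endpoint bounds; the magnetic part is
   of order b^2 / N^4. *)
Lemma trial_quotient_bound N e b :
  10 <= N -> 20 * b ^ 2 <= N -> 8 / (4 * N + 5) <= e <= 8 / (4 * N + 1) ->
  e ^ 2 * (kinetic_coef N + b ^ 2 / 4 * field_coef N) - e + (1 + e / 2) * mass_coef N <= 0.
Proof.
  intros HN Hb He.
  assert (HK : 0 <= kinetic_coef N) by (unfold kinetic_coef; apply Rdiv_le_0_compat; nra).
  assert (Hdefect : defect N e <= - (1 / (20 * N ^ 3))).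
  { pose proof (defect_at_left_end N HN). pose proof (defect_at_right_end N HN).
    assert (Hquad : forall e, defect N e
                      = kinetic_coef N * e ^ 2 + (mass_coef N / 2 - 1) * e + mass_coef N)
      by (intro; unfold defect; field).
    rewrite Hquad in *. apply (convex_quadratic_le _ _ _ _ _ _ _ HK He); assumption. }
  assert (He0 : 0 < e) by (assert (0 < 8 / (4 * N + 5)) by (apply Rdiv_lt_0_compat; lra); lra).
  assert (He2 : e <= 2 / N).
  { apply Rle_trans with (8 / (4 * N + 1)); [lra|].
    unfold Rdiv. apply Rmult_le_reg_r with ((4 * N + 1) * N); [nra|].
    field_simplify; lra. }
  assert (Hfield : e ^ 2 * (b ^ 2 / 4) * field_coef N <= 1 / (20 * N ^ 3)).
  { apply Rle_trans with (e ^ 2 * (b ^ 2 / 4) * (1 / N ^ 2)).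
    - apply Rmult_le_compat_l; [nra | apply field_coef_le, HN].
    - apply Rle_trans with ((2 / N) ^ 2 * (N / 20 / 4) * (1 / N ^ 2)).
      + apply Rmult_le_compat_r; [apply Rlt_le, Rdiv_lt_0_compat; [lra | apply pow_lt; lra]|].
        apply Rmult_le_compat; [nra | nra | apply pow_incr; lra | lra].
      + right. field. lra. }
  unfold defect in Hdefect. nra.
Qed.

Lemma mu1_le_rayleigh h b u :
  admissible u -> 0 < int_disk (fun x y => Cmod (u x y) ^ 2) ->
  Rbar_le (mu1 h b) (rayleigh h b u).
Proof.
  intros Hu Hmass. unfold mu1.
  destruct (Glb_Rbar_correct (fun q => exists u : R -> R -> C,
    admissible u /\ 0 < int_disk (fun x y => Cmod (u x y) ^ 2) /\ q = rayleigh h b u))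
    as [Hlb _].
  apply Hlb. exists u. auto.
Qed.

Lemma Rpower_three_halves h : 0 < h -> Rpower h (3 / 2) = h * sqrt h.
Proof.
  intro Hh. replace (3 / 2) with (1 + / 2) by field.
  rewrite Rpower_plus, Rpower_1, Rpower_sqrt by exact Hh. reflexivity.
Qed.

Lemma rayleigh_trial_le b m h :
  let N := INR (S m) in
  10 <= N -> 20 * b ^ 2 <= N -> 0 < h -> 8 / (4 * N + 5) <= sqrt h <= 8 / (4 * N + 1) ->
  rayleigh h b (trial b (S m)) <= - h - / 2 * Rpower h (3 / 2).
Proof.
  intros N HN Hb Hh He.
  pose proof (J_pos (2 * S m)) as HJ.
  assert (HM : 0 < mass_coef N) by (apply mass_coef_pos; lra).
  pose proof (trial_quotient_bound N (sqrt h) b HN Hb He) as Hbound.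
  unfold rayleigh. rewrite int_disk_Cmod_trial, int_disk_mag_grad_sq_trial,
    int_circle_Cmod_trial, Rpower_three_halves by exact Hh. fold N.
  set (e := sqrt h) in *.
  assert (Hh2 : h = e ^ 2) by (unfold e; rewrite pow2_sqrt; lra).
  assert (He0 : 0 < e) by (unfold e; apply sqrt_lt_R0, Hh).
  rewrite Hh2. unfold Rdiv. apply Rmult_le_reg_r with (mass_coef N * J (2 * S m)); [nra|].
  rewrite Rmult_assoc, Rinv_l, Rmult_1_r by nra.
  assert (0 <= e ^ 2 * J (2 * S m)) by nra.
  transitivity ((- e ^ 2 - / 2 * (e ^ 2 * e)) * (mass_coef N * J (2 * S m))
                + e ^ 2 * J (2 * S m) * (e ^ 2 * (kinetic_coef N + b ^ 2 / 4 * field_coef N)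
                                         - e + (1 + e / 2) * mass_coef N)).
  - right. field.
  - nra.
Qed.

(* The intervals [8 / (4 N + 5), 8 / (4 N + 1)] tile (0, 8 / (4 T + 5)] as N runs over the
   integers above T. *)
Lemma exists_bracketing_index e T :
  0 < e -> 0 <= T -> e <= 8 / (4 * T + 5) ->
  exists m : nat, T <= INR (S m) /\ 8 / (4 * INR (S m) + 5) <= e <= 8 / (4 * INR (S m) + 1).
Proof.
  intros He HT HeT.
  set (r := (8 / e - 1) / 4).
  assert (Hr : e * (4 * r + 1) = 8) by (unfold r; field; lra).
  assert (HeT' : e * (4 * T + 5) <= 8).
  { apply Rmult_le_reg_r with (/ (4 * T + 5)); [apply Rinv_0_lt_compat; lra|].
    rewrite Rmult_assoc, Rinv_r by lra. unfold Rdiv in HeT. lra. }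
  assert (HTr : T + 1 <= r).
  { apply Rmult_le_reg_l with (4 * e); [lra|]. nra. }
  destruct (nfloor_ex r ltac:(lra)) as [[|m] [Hm1 Hm2]].
  - simpl in Hm2. lra.
  - set (N := INR (S m)) in *.
    assert (0 <= N) by apply pos_INR.
    assert (0 <= e * (N + 1 - r)) by (apply Rmult_le_pos; lra).
    assert (0 <= e * (r - N)) by (apply Rmult_le_pos; lra).
    exists m. fold N. split; [lra|]. split.
    + apply Rmult_le_reg_r with (4 * N + 5); [lra|].
      unfold Rdiv. rewrite Rmult_assoc, Rinv_l by lra. lra.
    + apply Rmult_le_reg_r with (4 * N + 1); [lra|].
      unfold Rdiv. rewrite Rmult_assoc, Rinv_l by lra. lra.
Qed.

Theorem lemma2p2 (b : R) (hb : 0 < b) :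
  exists h0 : R, 0 < h0 < 1 /\
    forall h : R, 0 < h < h0 ->
      Rbar_le (mu1 h b) (Finite (- h - / 2 * Rpower h (3 / 2))).
Proof.
  set (T := 10 + 20 * b ^ 2).
  set (e0 := 8 / (4 * T + 5)).
  assert (HT : 10 <= T) by (unfold T; nra).
  assert (He0 : 0 < e0 < 1).
  { unfold e0. split; [apply Rdiv_lt_0_compat; lra|].
    apply Rmult_lt_reg_r with (4 * T + 5); [lra|].
    unfold Rdiv. rewrite Rmult_assoc, Rinv_l by lra. lra. }
  exists (e0 ^ 2). split; [split; nra|].
  intros h [Hh Hhe0].
  assert (He : sqrt h <= e0).
  { rewrite <- (sqrt_pow2 e0) by lra. apply sqrt_le_1_alt. lra. }
  destruct (exists_bracketing_index (sqrt h) T (sqrt_lt_R0 h Hh) ltac:(lra) He)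
    as [m [HTm Hm]].
  apply Rbar_le_trans with (Finite (rayleigh h b (trial b (S m)))).
  - apply mu1_le_rayleigh; [apply trial_admissible|].
    rewrite int_disk_Cmod_trial.
    apply Rmult_lt_0_compat; [apply mass_coef_pos, pos_INR | apply J_pos].
  - apply rayleigh_trial_le; [lra | unfold T in HTm; lra | exact Hh | exact Hm].
Qed.
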